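(* Consider the strategic usage dynamics described in the context, satisfying assumptions (A1)–(A4). If the state $(H^t,A^t)$ is zero-loss at time $t$, then the state $(H^\tau,A^\tau)$ is zero-loss for all times $\tau\ge t$.
   Context: Setting. There are $n\ge 1$ users and $m\ge 1$ services. User $i\in\{1,\dots,n\}$ has fixed features $x_i\in\mathcal X$ and a fixed label $y_i\in\{+1,-1\}$. $\mathcal H$ is a set of classifiers $h:\mathcal X\to\{+1,-1\}$. There is a utility $u:\mathcal X\times\mathcal H\to\mathbb R$ (written $u(x,h)$) and a loss $\ell:\mathcal H\times\mathcal X\times\{+1,-1\}\to\mathbb R$ satisfying: (A1) for any $h_1,h_2\in\mathcal H$ and $x\in\mathcal X$ with $h_1(x)=-1$ and $h_2(x)=+1$, we have $u(x,h_1)\le 0<u(x,h_2)$; (A2) for all $h\in\mathcal H$ the loss is non-negative, $-y\,\ell(h,x,y)$ is strictly monotonically increasing with $u(x,h)$, and there exists $v>0$ such that $u(x,h)=0$ implies $\ell(h,x,y)=v$; (A3) (realizability) there is $h\in\mathcal H$ with $\ell(h,x_i,y_i)=0$ for all $i=1,\dots,n$. Dynamics. Fix $q>1$ and a memory parameter $p\ge 0$. A state at time $t$ is $(H^t,A^t)$ with $H^t=(h^t_1,\dots,h^t_m)\in\mathcal H^m$ and usage matrix $A^t\in\mathbb R_+^{n\times m}$. Given classifiers $H$, a user best response is any $A\in\arg\max_{A\in\mathbb R_+^{n\times m}}\sum_{i=1}^n\big[\sum_{j=1}^m A_{ij}u(x_i,h_j)-\frac1q(\sum_{j=1}^m A_{ij})^q\big]$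 (any tie-breaking). Memory: $M^{-1}=0$ and $M^t=\frac{A^t}{1+p}+\frac{pM^{t-1}}{1+p}$ for $t\ge0$. For a memory matrix $M^t$ define $L^t(H)=\sum_{j=1}^m\sum_{i=1}^n\frac{M^t_{ij}}{\sum_{k=1}^n M^t_{kj}}\ell(h_j,x_i,y_i)$, with the fraction taken to be $0$ when $\sum_k M^t_{kj}=0$. The service update is sticky: $H^{t+1}\in\arg\min_{H\in\mathcal H^m}L^t(H)$, and whenever $L^{t-1}(H^t)=L^t(H^t)$ we have $H^{t+1}=H^t$. (A4) $H^0\in\mathcal H^m$ is arbitrary; for every $t\ge0$, $A^t$ is a user best response to $H^t$, and $H^{t+1}$ is obtained from $M^t$ by the sticky service update. Zero-loss. A state $(H,A)$ is zero-loss if every service $j$ satisfies: (1) $A_{ij}\ell(h_j,x_i,y_i)=0$ for all $i$, and (2) $u(x_i,h_j)\le 0$ for all $i$ with $y_i=-1$. *)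

From HB Require Import structures.
From mathcomp Require Import all_boot all_order all_algebra.
From mathcomp Require Import reals exp.
Set Implicit Arguments. Unset Strict Implicit. Unset Printing Implicit Defensive.
Import Order.TTheory GRing.Theory Num.Theory.
Local Open Scope ring_scope.

Section Dyn.
Variables (R : realType) (X : Type).
(* Classifiers h : X -> {+1,-1}; +1 is encoded by true, -1 by false. *)
Definition classifier := X -> bool.
Definition sgn (b : bool) : R := if b then 1 else -1.

Variables (n m : nat) (x : 'I_n -> X) (y : 'I_n -> bool).
Variables (u : X -> classifier -> R) (ell : classifier -> X -> bool -> R).

Definition user_obj (q : R) (Hc : 'I_m -> classifier) (A : 'M[R]_(n, m)) : R :=
  \sum_(i < n) (\sum_(j < m) A i j * u (x i) (Hc j)
                - q^-1 * powR (\sum_(j < m) A i j) q).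

Definition nonneg_mx (A : 'M[R]_(n, m)) := forall i j, 0 <= A i j.

Definition best_response (q : R) (Hc : 'I_m -> classifier) (A : 'M[R]_(n, m)) :=
  nonneg_mx A /\
  forall A' : 'M[R]_(n, m), nonneg_mx A' -> user_obj q Hc A' <= user_obj q Hc A.

(* memo p A k = M^(k-1):  memo 0 = M^{-1} = 0,
   memo (t+1) = M^t = A^t/(1+p) + p M^{t-1}/(1+p). *)
Fixpoint memo (p : R) (A : nat -> 'M[R]_(n, m)) (k : nat) : 'M[R]_(n, m) :=
  match k with
  | 0 => 0
  | k'.+1 => (1 + p)^-1 *: A k' + (p / (1 + p)) *: memo p A k'
  end.

Definition Lfun (M : 'M[R]_(n, m)) (Hc : 'I_m -> classifier) : R :=
  \sum_(j < m) \sum_(i < n)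
     (if \sum_(k < n) M k j == 0 then 0 else M i j / \sum_(k < n) M k j)
     * ell (Hc j) (x i) (y i).

Definition zero_loss (Hc : 'I_m -> classifier) (A : 'M[R]_(n, m)) :=
  forall j : 'I_m,
    (forall i, A i j * ell (Hc j) (x i) (y i) = 0) /\
    (forall i, y i = false -> u (x i) (Hc j) <= 0).
End Dyn.

(** By realizability every updated classifier profile has zero loss against the
    memory it was fitted to, so the memory only weights zero-loss (user, service)
    pairs.  If the state is zero-loss, the new usage adds no weight elsewhere,
    the services' loss stays zero and, by stickiness, the classifiers do not
    move.  Against fixed classifiers a best-responding user only uses services
    of maximal, positive utility; such a user was therefore already active at
    the previous step on a service of the same utility, hence of the same loss,
    which was zero. *)
From HB Require Import structures.
From mathcomp Require Import all_boot all_order all_algebra.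
From mathcomp Require Import reals exp.
From mathcomp Require Import ring lra.
Import Order.TTheory GRing.Theory Num.Theory.
Local Open Scope ring_scope.
Set Implicit Arguments. Unset Strict Implicit.

Section SingleUser.
Variables (R : realType) (m : nat) (q : R) (w : 'I_m -> R).
Hypothesis q_gt1 : 1 < q.

Let q_gt0 : 0 < q. Proof. exact: lt_trans ltr01 q_gt1. Qed.

Definition payoff (a : 'I_m -> R) : R :=
  \sum_(j < m) a j * w j - q^-1 * powR (\sum_(j < m) a j) q.

Definition optimal_usage (a : 'I_m -> R) :=
  (forall j, 0 <= a j) /\
  forall a' : 'I_m -> R, (forall j, 0 <= a' j) -> payoff a' <= payoff a.

Definition shift (a : 'I_m -> R) (k : 'I_m) (b : R) (j : 'I_m) : R :=
  a j + (j == k)%:R * b.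

Lemma sum_shift_mul a k b (f : 'I_m -> R) :
  \sum_(j < m) shift a k b j * f j = \sum_(j < m) a j * f j + b * f k.
Proof.
rewrite /shift; under eq_bigr do rewrite mulrDl -mulrA.
rewrite big_split /= [X in _ + X](bigD1 k) //= eqxx mul1r.
by rewrite [X in _ + (_ + X)]big1 ?addr0 // => j /negbTE->; rewrite mul0r.
Qed.

Lemma sum_shift a k b : \sum_(j < m) shift a k b j = \sum_(j < m) a j + b.
Proof.
have := sum_shift_mul a k b (fun=> 1).
by under eq_bigr do rewrite mulr1; under [in RHS]eq_bigr do rewrite mulr1; rewrite mulr1.
Qed.

Lemma payoff_shift a k b :
  payoff (shift a k b) =
  \sum_(j < m) a j * w j + b * w k - q^-1 * powR (\sum_(j < m) a j + b) q.
Proof. by rewrite /payoff sum_shift_mul sum_shift. Qed.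

Lemma shift_ge0 a k b :
  (forall j, 0 <= a j) -> 0 <= a k + b -> forall j, 0 <= shift a k b j.
Proof.
move=> a_ge0 akb_ge0 j; rewrite /shift.
by have [->|_] := eqVneq j k; rewrite ?mul1r // mul0r addr0.
Qed.

Section Optimal.
Variable a : 'I_m -> R.
Hypothesis a_opt : optimal_usage a.

Let a_ge0 : forall j, 0 <= a j. Proof. by case: a_opt. Qed.

Let payoff_le a' : (forall j, 0 <= a' j) -> payoff a' <= payoff a.
Proof. by case: a_opt => _; apply. Qed.

(* Moving the mass a j from service j to service k would gain a j * (w k - w j). *)
Lemma optimal_usage_argmax j k : 0 < a j -> w k <= w j.
Proof.
move=> aj_gt0; rewrite leNgt; apply/negP => wjk.
set a' := shift (shift a k (a j)) j (- a j).
have a'_ge0 : forall j', 0 <= a' j'.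
  apply: shift_ge0; first by apply: shift_ge0; rewrite ?addr_ge0 ?a_ge0 ?ltW.
  by rewrite /shift addrAC subrr add0r mulr_ge0 ?ler0n ?ltW.
have := payoff_le a'_ge0; rewrite payoff_shift sum_shift_mul sum_shift addrK.
have : 0 < a j * w k - a j * w j by rewrite -mulrBr mulr_gt0 // subr_gt0.
rewrite /payoff; lra.
Qed.

(* Dropping service j lowers the congestion cost strictly, as powR is increasing. *)
Lemma optimal_usage_util_gt0 j : 0 < a j -> 0 < w j.
Proof.
move=> aj_gt0; rewrite ltNge; apply/negP => wj_le0.
set S := \sum_(k < m) a k.
have aj_leS : a j <= S by rewrite /S (bigD1 j) //= lerDl sumr_ge0.
have pow_lt : powR (S - a j) q < powR S q.
  apply: gt0_ltr_powR => //; rewrite ?nnegrE ?subr_ge0 //.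
    exact: le_trans (a_ge0 j) aj_leS.
  by rewrite ltrBlDr ltrDl.
have drop_ge0 : 0 <= a j + - a j by rewrite subrr.
have := payoff_le (shift_ge0 a_ge0 drop_ge0); rewrite payoff_shift.
have : q^-1 * powR (S - a j) q < q^-1 * powR S q by rewrite ltr_pM2l ?invr_gt0.
have : 0 <= - (a j * w j) by rewrite oppr_ge0 mulr_ge0_le0 // ltW.
rewrite /payoff -/S; lra.
Qed.

(* Starting from zero usage, putting eps on service j, with eps^(q-1) = q * w j / 2,
   gains eps * w j / 2. *)
Lemma optimal_usage_active j : 0 < w j -> exists k, 0 < a k.
Proof.
move=> wj_gt0; have [/existsP//|] := boolP [exists k, 0 < a k].
rewrite negb_exists => /forallP a_le0.
have a0 k : a k = 0 by apply/eqP; rewrite eq_le a_ge0 andbT leNgt a_le0.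
set c := q * w j / 2; have c_gt0 : 0 < c by rewrite divr_gt0 ?mulr_gt0.
set eps := powR c (q - 1)^-1; have eps_gt0 : 0 < eps by rewrite powR_gt0.
have pow_eps : powR eps q = eps * c.
  rewrite -(mulr_powRB1 (ltW eps_gt0) q_gt0); congr (_ * _).
  by rewrite /eps -powRrM mulVf ?subr_eq0 ?gt_eqF // powRr1 // ltW.
have add_ge0 : 0 <= a j + eps by rewrite a0 add0r ltW.
have := payoff_le (shift_ge0 a_ge0 add_ge0); rewrite payoff_shift /payoff.
rewrite !big1 => [|k _|k _]; rewrite ?a0 ?mul0r // powR0 ?gt_eqF // !add0r pow_eps.
have -> : q^-1 * (eps * c) = eps * w j / 2 by rewrite /c; field; rewrite gt_eqF.
have : 0 < eps * w j by rewrite mulr_gt0.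
lra.
Qed.

End Optimal.
End SingleUser.

Section Users.
Variables (R : realType) (X : Type) (n m : nat) (x : 'I_n -> X) (y : 'I_n -> bool).
Variables (u : X -> classifier X -> R) (ell : classifier X -> X -> bool -> R).
Variables (q : R) (Hc : 'I_m -> classifier X).
Hypothesis q_gt1 : 1 < q.

Definition utility_row (i : 'I_n) (j : 'I_m) : R := u (x i) (Hc j).

Lemma best_response_row (A : 'M[R]_(n, m)) i :
  best_response x u q Hc A -> optimal_usage q (utility_row i) (A i).
Proof.
case=> A_ge0 A_opt; split=> [j|a a_ge0]; first exact: A_ge0.
set A' := \matrix_(i', j) if i' == i then a j else A i' j.
have A'_ge0 : nonneg_mx A' by move=> i' j; rewrite mxE; case: eqP.
have payoff_A' i' : payoff q (utility_row i') (A' i') =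
    if i' == i then payoff q (utility_row i) a else payoff q (utility_row i') (A i').
  rewrite /payoff; case: eqP => [->|/eqP/negbTE i'i];
    by congr (_ - _ * powR _ _); apply: eq_bigr => j _; rewrite mxE ?eqxx ?i'i.
have obj_rows B : user_obj x u q Hc B = \sum_i0 payoff q (utility_row i0) (B i0) by [].
have := A_opt A' A'_ge0; rewrite !obj_rows (bigD1 i) //= [leRHS](bigD1 i) //= payoff_A' eqxx.
rewrite (eq_bigr (fun i0 => payoff q (utility_row i0) (A i0))) ?lerD2r // => i' /negbTE i'i.
by rewrite payoff_A' i'i.
Qed.

Lemma zero_loss_best_response (A A' : 'M[R]_(n, m)) :
  (forall i j k, u (x i) (Hc j) = u (x i) (Hc k) ->
     ell (Hc j) (x i) (y i) = ell (Hc k) (x i) (y i)) ->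
  best_response x u q Hc A -> best_response x u q Hc A' ->
  zero_loss x y u ell Hc A -> zero_loss x y u ell Hc A'.
Proof.
move=> ell_u A_br A'_br A_zl j; split=> [i|]; last exact: (A_zl j).2.
have [A'_opt A_opt] := (best_response_row i A'_br, best_response_row i A_br).
move: (A'_opt.1 j); rewrite le_eqVlt => /orP[/eqP<-|A'ij_gt0]; first by rewrite mul0r.
have [k Aik_gt0] := optimal_usage_active q_gt1 A_opt
                      (optimal_usage_util_gt0 q_gt1 A'_opt A'ij_gt0).
have uij : u (x i) (Hc j) = u (x i) (Hc k).
  by apply: le_anti; rewrite (optimal_usage_argmax A_opt) ?(optimal_usage_argmax A'_opt).
have /eqP := (A_zl k).1 i; rewrite mulf_eq0 gt_eqF //= => /eqP ell_k.
by rewrite (ell_u _ _ _ uij) ell_k mulr0.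
Qed.

End Users.

Section Loss.
Variables (R : realType) (X : Type) (n m : nat) (x : 'I_n -> X) (y : 'I_n -> bool).
Variable (ell : classifier X -> X -> bool -> R).

Definition loss_free (M : 'M[R]_(n, m)) (Hc : 'I_m -> classifier X) :=
  forall i j, M i j * ell (Hc j) (x i) (y i) = 0.

Definition usage_share (M : 'M[R]_(n, m)) i j : R :=
  if \sum_(k < n) M k j == 0 then 0 else M i j / \sum_(k < n) M k j.

Lemma usage_share_ge0 M i j : nonneg_mx M -> 0 <= usage_share M i j.
Proof.
move=> M_ge0; rewrite /usage_share; case: ifP => // _.
by rewrite divr_ge0 ?sumr_ge0.
Qed.

Lemma usage_share_eq0 M i j : nonneg_mx M -> (usage_share M i j == 0) = (M i j == 0).
Proof.
move=> M_ge0; rewrite /usage_share; case: ifPn => [/eqP S0|S0].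
  by rewrite eqxx (psumr_eq0P (fun k _ => M_ge0 k j) S0 (i := i) isT) eqxx.
by rewrite mulf_eq0 invr_eq0 (negbTE S0) orbF.
Qed.

Variables (M : 'M[R]_(n, m)) (Hc : 'I_m -> classifier X).
Hypotheses (M_ge0 : nonneg_mx M) (ell_ge0 : forall j i, 0 <= ell (Hc j) (x i) (y i)).

Let term_ge0 j i : 0 <= usage_share M i j * ell (Hc j) (x i) (y i).
Proof. by rewrite mulr_ge0 ?usage_share_ge0. Qed.

Lemma Lfun_ge0 : 0 <= Lfun x y ell M Hc.
Proof. by apply: sumr_ge0 => j _; apply: sumr_ge0 => i _; apply: term_ge0. Qed.

Lemma Lfun_eq0P : Lfun x y ell M Hc = 0 <-> loss_free M Hc.
Proof.
have row_ge0 j : 0 <= \sum_(i < n) usage_share M i j * ell (Hc j) (x i) (y i).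
  by apply: sumr_ge0 => i _; apply: term_ge0.
split=> [L0 i j | M_lf].
  have /eqP := psumr_eq0P (fun i _ => term_ge0 j i)
                 (psumr_eq0P (fun j _ => row_ge0 j) L0 (i := j) isT) (i := i) isT.
  by rewrite !mulf_eq0 usage_share_eq0 // -mulf_eq0 => /eqP.
apply: big1 => j _; apply: big1 => i _; apply/eqP.
by rewrite mulf_eq0 usage_share_eq0 // -mulf_eq0 M_lf.
Qed.

End Loss.

Section Memory.
Variables (R : realType) (n m : nat) (p : R) (A : nat -> 'M[R]_(n, m)).

Lemma memo_ge0 : 0 <= p -> (forall t, nonneg_mx (A t)) -> forall t, nonneg_mx (memo p A t).
Proof.
move=> p_ge0 A_ge0; have p1_ge0 : 0 <= 1 + p by rewrite addr_ge0.
elim=> [|t IH] i j /=; rewrite !mxE //.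
by rewrite addr_ge0 ?mulr_ge0 ?invr_ge0 ?divr_ge0 ?A_ge0 ?IH.
Qed.

Lemma loss_free_memoS X (x : 'I_n -> X) y ell Hc t :
  loss_free x y ell (memo p A t) Hc -> loss_free x y ell (A t) Hc ->
  loss_free x y ell (memo p A t.+1) Hc.
Proof.
move=> M_lf A_lf i j /=; rewrite !mxE mulrDl -!mulrA.
by rewrite M_lf A_lf !mulr0 addr0.
Qed.

End Memory.

Theorem proposition2 (R : realType) (X : Type) (Hs : classifier X -> Prop)
  (u : X -> classifier X -> R) (ell : classifier X -> X -> bool -> R)
  (n m : nat) (x : 'I_n -> X) (y : 'I_n -> bool) (q p : R)
  (Hn : (0 < n)%N) (Hm : (0 < m)%N) (Hq : 1 < q) (Hp : 0 <= p)
  (* (A1) *)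
  (A1 : forall h1 h2 (xx : X), Hs h1 -> Hs h2 -> h1 xx = false -> h2 xx = true ->
          u xx h1 <= 0 /\ 0 < u xx h2)
  (* (A2) non-negativity *)
  (A2a : forall h xx yy, Hs h -> 0 <= ell h xx yy)
  (* (A2) -y*ell(h,x,y) is a strictly increasing function of u(x,h) over h in H *)
  (A2b : forall h1 h2 xx yy, Hs h1 -> Hs h2 ->
          (u xx h1 < u xx h2 -> - sgn R yy * ell h1 xx yy < - sgn R yy * ell h2 xx yy) /\
          (u xx h1 = u xx h2 -> ell h1 xx yy = ell h2 xx yy))
  (A2c : exists v : R, 0 < v /\
          forall h xx yy, Hs h -> u xx h = 0 -> ell h xx yy = v)
  (* (A3) realizability *)
  (A3 : exists h, Hs h /\ forall i : 'I_n, ell h (x i) (y i) = 0)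
  (* (A4) dynamics *)
  (H : nat -> 'I_m -> classifier X) (A : nat -> 'M[R]_(n, m))
  (H0 : forall j, Hs (H 0%N j))
  (HA : forall t, best_response x u q (H t) (A t))
  (Hmin : forall t, (forall j, Hs (H t.+1 j)) /\
          forall H' : 'I_m -> classifier X, (forall j, Hs (H' j)) ->
            Lfun x y ell (memo p A t.+1) (H t.+1) <= Lfun x y ell (memo p A t.+1) H')
  (Hsticky : forall t, Lfun x y ell (memo p A t) (H t) = Lfun x y ell (memo p A t.+1) (H t) ->
             H t.+1 = H t)
  (t : nat) (Hz : zero_loss x y u ell (H t) (A t)) :
  forall tau : nat, (t <= tau)%N -> zero_loss x y u ell (H tau) (A tau).
Proof.
have H_adm tau j : Hs (H tau j) by case: tau => [|tau]; [exact: H0 | exact: (Hmin tau).1].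
have ell_ge0 tau j i : 0 <= ell (H tau j) (x i) (y i) by apply/A2a/H_adm.
have M_ge0 := memo_ge0 Hp (fun t => (HA t).1).
have L_eq0 tau : Lfun x y ell (memo p A tau) (H tau) = 0.
  case: tau => [|tau].
    by apply/(Lfun_eq0P (M_ge0 0%N) (ell_ge0 0%N)) => i j; rewrite mxE mul0r.
  have [h [h_adm h_eq0]] := A3.
  apply: le_anti; rewrite Lfun_ge0 ?andbT //.
  have <- : Lfun x y ell (memo p A tau.+1) (fun=> h) = 0.
    by apply/Lfun_eq0P => // [j i|i j]; rewrite ?h_eq0 ?mulr0 ?A2a.
  exact: (Hmin tau).2.
have step tau : zero_loss x y u ell (H tau) (A tau) ->
                zero_loss x y u ell (H tau.+1) (A tau.+1).
  move=> Z; have H_stay : H tau.+1 = H tau.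
    apply: Hsticky; rewrite L_eq0; apply/esym/(Lfun_eq0P (M_ge0 _) (ell_ge0 tau)).
    apply: loss_free_memoS => [|i j]; last exact: (Z j).1.
    exact/(Lfun_eq0P (M_ge0 _) (ell_ge0 tau)).
  have := HA tau.+1; rewrite H_stay => A_br.
  have ell_u i j k : u (x i) (H tau j) = u (x i) (H tau k) ->
                     ell (H tau j) (x i) (y i) = ell (H tau k) (x i) (y i).
    exact: (A2b _ _ _ _ (H_adm tau j) (H_adm tau k)).2.
  exact: (zero_loss_best_response Hq ell_u (HA tau) A_br Z).
move=> tau /subnK <-; elim: (tau - t)%N => [|d IH]; first by rewrite add0n.
by rewrite addSn; apply: step.
Qed.
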